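(* Suppose the e-values are valid, i.e. $\mathbb{E}[e_t\mid\mathcal{F}_{t-1}]\le 1$ almost surely for every $t$ with $\theta_t=0$. Define the oracle e-value-based FDP estimate $$\mathrm{FDP}^*_{\mathrm{e}}(t)=\sum_{j\in\mathcal{H}_0(t)}\frac{\alpha_j}{R_{j-1}+1}.$$ Then for every $t\ge1$: if $\mathbb{E}[\mathrm{FDP}^*_{\mathrm{e}}(t)]\le\alpha$, then $\mathrm{FDR}(t)\le\alpha$.
   Context: Let $\alpha\in(0,1)$ be a target level. Hypotheses are indexed by $t=1,2,\dots$; $\theta_t\in\{0,1\}$ is a fixed (non-random) indicator with $\theta_t=0$ iff the $t$-th null hypothesis is true. $e_1,e_2,\dots$ are nonnegative random variables (e-values). Testing levels $\alpha_1,\alpha_2,\dots$ are nonnegative random variables and the decisions are $\delta_t=\mathbb{1}\{e_t\ge 1/\alpha_t\}$ (with $\delta_t=0$ when $\alpha_t=0$). Let $\mathcal{F}_t=\sigma(\delta_1,\dots,\delta_t)$, $\mathcal{F}_0$ trivial; each $\alpha_t$ is required to be $\mathcal{F}_{t-1}$-measurable. $R_t=\sum_{j=1}^t\delta_j$, $R_0=0$. $\mathcal{H}_0(t)=\{j\le t:\theta_j=0\}$. $\mathrm{FDR}(t)=\mathbb{E}\big[\sum_{j\in\mathcal{H}_0(t)}\delta_j/(R_t\vee 1)\big]$. *)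

From HB Require Import structures.
From mathcomp Require Import all_boot all_order all_algebra.
From mathcomp Require Import all_classical all_reals all_analysis.
Set Implicit Arguments. Unset Strict Implicit. Unset Printing Implicit Defensive.
Import Order.TTheory GRing.Theory Num.Theory.
Local Open Scope classical_set_scope.
Local Open Scope ring_scope.

Section OnlineFDR.
Context {d : measure_display} {T : measurableType d} {R : realType}.

Definition decision (e alpha : nat -> T -> R) (t : nat) (x : T) : bool :=
  (0 < alpha t x) && ((alpha t x)^-1 <= e t x).

Definition nrej (e alpha : nat -> T -> R) (t : nat) (x : T) : R :=
  \sum_(1 <= j < t.+1) (decision e alpha j x)%:R.

Definition filt (e alpha : nat -> T -> R) (t : nat) : set (set T) :=
  <<s [set A | exists j : nat, [/\ (1 <= j)%N, (j <= t)%N &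
                 A = [set x | decision e alpha j x]]] >>.

Definition measurable_wrt (G : set (set T)) (f : T -> R) : Prop :=
  forall B : set R, measurable B -> G (f @^-1` B).

(* "E[X | G] <= 1 a.s." for a nonnegative X: there is a version Y of the
   conditional expectation of X given G (G-measurable, nonnegative, with
   int_A X dP = int_A Y dP for every A in G) such that Y <= 1 P-a.s. *)
Definition condexp_le1 (P : probability T R) (G : set (set T)) (X : T -> R) :
  Prop :=
  exists Y : T -> R,
    [/\ measurable_wrt G Y, (forall x, 0 <= Y x),
        (forall A, G A -> (\int[P]_(x in A) (X x)%:E =
                           \int[P]_(x in A) (Y x)%:E)%E) &
        {ae P, forall x, Y x <= 1}].

Definition nfalse (theta : nat -> bool) (e alpha : nat -> T -> R) (t : nat)
  (x : T) : R :=
  \sum_(1 <= j < t.+1 | ~~ theta j) (decision e alpha j x)%:R.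

Definition FDP (theta : nat -> bool) (e alpha : nat -> T -> R) (t : nat)
  (x : T) : R :=
  nfalse theta e alpha t x / Num.max (nrej e alpha t x) 1.

Definition FDR (P : probability T R) (theta : nat -> bool)
  (e alpha : nat -> T -> R) (t : nat) : \bar R :=
  (\int[P]_x (FDP theta e alpha t x)%:E)%E.

Definition FDPstar_e (theta : nat -> bool) (e alpha : nat -> T -> R) (t : nat)
  (x : T) : R :=
  \sum_(1 <= j < t.+1 | ~~ theta j) alpha j x / (nrej e alpha j.-1 x + 1).

End OnlineFDR.

From Pilot Require Import Defs.
From HB Require Import structures.
From mathcomp Require Import all_boot all_order all_algebra.
From mathcomp Require Import all_classical all_reals all_analysis.
From mathcomp Require Import measurable_realfun.
Import Order.TTheory GRing.Theory Num.Theory.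
Local Open Scope classical_set_scope.
Local Open Scope ring_scope.
Set Implicit Arguments. Unset Strict Implicit.

(* Since R_{j-1} + 1 <= R_t whenever hypothesis j <= t is rejected, and a
   rejection means alpha_j e_j >= 1, the FDP is bounded pointwise by
   sum_{j in H_0(t)} alpha_j e_j / (R_{j-1} + 1).  The weight
   alpha_j / (R_{j-1} + 1) is F_{j-1}-measurable; as F_{j-1} is generated by
   finitely many events it is constant on the atoms of F_{j-1}, so on each
   atom e_j may be replaced by its conditional expectation, which is at
   most 1.  Summing over atoms and over j gives FDR(t) <= E[FDP*_e(t)]. *)

Section measure_facts.
Context {d : measure_display} {T : measurableType d} {R : realType}.

Lemma measurable_funV_ge1 (h : T -> R) : measurable_fun setT h ->
  (forall x, 1 <= h x) -> measurable_fun setT (fun x => (h x)^-1).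
Proof.
move=> mh h1.
have -> : (fun x => (h x)^-1) = (fun y : R => (Num.max y 1)^-1) \o h.
  by apply/funext => x /=; rewrite (max_idPl (h1 x)).
apply: measurableT_comp => //; apply: nonincreasing_measurable => // x y xy.
have max_gt0 (z : R) : 0 < Num.max z 1 by rewrite lt_max ltr01 orbT.
by rewrite lef_pV2 ?posrE // ge_max !le_max xy lexx !orbT.
Qed.

Lemma measurable_sum_seq (I : eqType) (s : seq I) (P : pred I) (h : I -> T -> R) :
  (forall i, i \in s -> P i -> measurable_fun setT (h i)) ->
  measurable_fun setT (fun x => \sum_(i <- s | P i) h i x).
Proof.
elim: s => [|i s IH] mh.
  by under eq_fun do rewrite big_nil; exact: measurable_cst.
have mhs : measurable_fun setT (fun x => \sum_(j <- s | P j) h j x).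
  by apply: IH => j js; apply: mh; rewrite inE js orbT.
under eq_fun do rewrite big_cons; case Pi : (P i) => //.
by apply: measurable_funD => //; apply: mh; rewrite ?mem_head.
Qed.

Lemma ge0_integral_sum_seq (mu : {measure set T -> \bar R}) (I : eqType)
    (s : seq I) (P : pred I) (f : I -> T -> R) :
  (forall i, i \in s -> P i -> measurable_fun setT (f i)) ->
  (forall i x, i \in s -> P i -> 0 <= f i x) ->
  (\int[mu]_x (\sum_(i <- s | P i) f i x)%:E =
   \sum_(i <- s | P i) \int[mu]_x (f i x)%:E)%E.
Proof.
elim: s => [|i s IH] mf f0.
  by under eq_integral do rewrite big_nil; rewrite big_nil integral0.
have mfs j : j \in s -> P j -> measurable_fun setT (f j).
  by move=> js; apply: mf; rewrite inE js orbT.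
have f0s j x : j \in s -> P j -> 0 <= f j x.
  by move=> js; apply: f0; rewrite inE js orbT.
rewrite big_cons -(IH mfs f0s); under eq_integral do rewrite big_cons.
case Pi : (P i) => //; under eq_integral do rewrite EFinD.
rewrite ge0_integralD //.
- by move=> x _; rewrite lee_fin f0 ?mem_head.
- by apply/measurable_EFinP; apply: mf; rewrite ?mem_head.
- by move=> x _; rewrite lee_fin big_seq_cond sumr_ge0 // => j /andP[]; exact: f0s.
- by apply/measurable_EFinP; exact: measurable_sum_seq.
Qed.

Lemma ge0_integral_finite_partition (mu : {measure set T -> \bar R})
    (I : finType) (A : I -> set T) (f : T -> \bar R) :
  (forall i, measurable (A i)) -> trivIset setT A -> (forall x, exists i, A i x) ->
  measurable_fun setT f -> (forall x, 0 <= f x)%E ->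
  (\int[mu]_x f x = \sum_(i <- enum I) \int[mu]_(x in A i) f x)%E.
Proof.
move=> mA tA covA mf f0.
have UA : \big[setU/set0]_(i <- enum I) A i = setT.
  rewrite -bigcup_seq; apply/seteqP; split => // x _.
  by have [i Ai] := covA x; exists i => //=; rewrite mem_enum.
have := ge0_integral_bigsetU mu mA (enum_uniq I) (sub_trivIset (@subsetT _ _) tA).
by rewrite /= UA; apply.
Qed.

Lemma measurable_wrt_measurable (G : set (set T)) (f : T -> R) :
  G `<=` measurable -> measurable_wrt G f -> measurable_fun setT f.
Proof. by move=> GM mf _ B mB; rewrite setTI; apply: GM; exact: mf. Qed.

Section condexp_le1_integral.
Variables (P : probability T R) (G : set (set T)) (X Z : T -> R).
Hypotheses (GM : G `<=` measurable) (mX : measurable_fun setT X).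
Hypotheses (X0 : forall x, 0 <= X x) (Z0 : forall x, 0 <= Z x).
Hypothesis XG : condexp_le1 P G X.

(* On a set of [G] where [Z] is constant, [Z] factors out and [X] can be
   replaced by its conditional expectation, which is at most 1. *)
Lemma condexp_le1_integral_mul_set (A : set T) : G A ->
  (forall x y, A x -> A y -> Z x = Z y) ->
  (\int[P]_(x in A) (Z x * X x)%:E <= \int[P]_(x in A) (Z x)%:E)%E.
Proof.
move=> GA ZA; have mA := GM GA; have [Y [YG Y0 XY Y1]] := XG.
have [[x0 Ax0]|A0] := pselect (exists x, A x); last first.
  rewrite (_ : A = set0) ?integral_set0 //.
  by apply/seteqP; split => // x Ax; apply: A0; exists x.
rewrite (eq_integral (fun x => (Z x0)%:E * (X x)%:E)%E); last first.
  by move=> x /[!inE] Ax; rewrite (ZA x x0 Ax Ax0) EFinM.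
rewrite [leRHS](eq_integral (fun x => (Z x0)%:E * (cst 1 x)%:E)%E); last first.
  by move=> x /[!inE] Ax; rewrite (ZA x x0 Ax Ax0) /= -EFinM mulr1.
have mEFin (f : T -> R) :
    measurable_fun setT f -> measurable_fun A (fun x => (f x)%:E).
  by move=> mf; apply/measurable_EFinP; exact: measurable_funS mf.
rewrite !ge0_integralZl_EFin //; last 3 first.
- exact/mEFin/measurable_cst.
- by move=> x _; rewrite lee_fin.
- exact: mEFin.
apply: lee_wpmul2l; first by rewrite lee_fin.
rewrite XY //; apply: ae_ge0_le_integral => //.
- by move=> x _; rewrite lee_fin.
- exact: mEFin (measurable_wrt_measurable GM YG).
- exact/mEFin/measurable_cst.
- by apply: filterS Y1 => x Yx _; rewrite lee_fin.
Qed.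

Lemma condexp_le1_integral_mul (I : finType) (A : I -> set T) :
  (forall i, G (A i)) -> trivIset setT A -> (forall x, exists i, A i x) ->
  (forall i x y, A i x -> A i y -> Z x = Z y) -> measurable_fun setT Z ->
  (\int[P]_x (Z x * X x)%:E <= \int[P]_x (Z x)%:E)%E.
Proof.
move=> GA tA covA ZA mZ; have mA i := GM (GA i).
rewrite !(ge0_integral_finite_partition P mA tA covA).
- apply: lee_sum => i _.
  by apply: condexp_le1_integral_mul_set; [exact: GA|exact: ZA].
- exact/measurable_EFinP.
- by move=> x; rewrite lee_fin.
- by apply/measurable_EFinP; exact: measurable_funM.
- by move=> x; rewrite lee_fin mulr_ge0.
Qed.

End condexp_le1_integral.

End measure_facts.

Section online_fdr.
Context {d : measure_display} {T : measurableType d} {R : realType}.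
Variables (e alpha : nat -> T -> R).
Local Notation dec := (decision e alpha).
Local Notation nrej := (nrej e alpha).

Lemma decisionE j x : dec j x = (0 < alpha j x) && (1 <= alpha j x * e j x).
Proof.
rewrite /decision; have [a0|] //= := ltP 0 (alpha j x).
by rewrite -[(alpha j x)^-1]mulr1 ler_pdivrMl.
Qed.

Lemma nrej_ge0 n x : 0 <= nrej n x.
Proof. by apply: sumr_ge0 => i _; rewrite ler0n. Qed.

Lemma nrej_pred j x : (1 <= j)%N -> nrej j x = nrej j.-1 x + (dec j x)%:R.
Proof. by case: j => // j _; rewrite /Defs.nrej big_nat_recr. Qed.

Lemma le_nrej m n x : (m <= n)%N -> nrej m x <= nrej n x.
Proof.
move=> mn; rewrite /Defs.nrej (@big_cat_nat _ _ _ m.+1 1 n.+1) //=.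
by rewrite lerDl; apply: sumr_ge0 => i _; rewrite ler0n.
Qed.

Definition oracle_term j x := alpha j x / (nrej j.-1 x + 1).

Definition decision_vector n x : {ffun 'I_n -> bool} :=
  [ffun i : 'I_n => dec i.+1 x].

Definition decision_atom {n} (v : {ffun 'I_n -> bool}) : set T :=
  [set x | decision_vector n x = v].

Lemma decision_vectorP n x y : decision_vector n x = decision_vector n y ->
  forall j, (1 <= j <= n)%N -> dec j x = dec j y.
Proof.
move=> xy [//|j] /= jn.
by have := congr1 (fun v : {ffun _ -> _} => v (Ordinal jn)) xy; rewrite !ffunE.
Qed.

Lemma filt_decision_vector_invariant n A : filt e alpha n A ->
  forall x y, decision_vector n x = decision_vector n y -> A x -> A y.
Proof.
pose C := [set B : set T |
  forall x y, decision_vector n x = decision_vector n y -> B x -> B y].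
suff : filt e alpha n `<=` C by move=> FC /FC.
apply: smallest_sub.
  split => [x y //|B CB x y xy [_ nBx]|F CF x y xy [k _ Fkx]].
  - by split => // By; apply: nBx; exact: CB (esym xy) By.
  - by exists k => //; exact: CF Fkx.
by move=> _ [j [j1 jn ->]] x y xy /=; rewrite (decision_vectorP xy) ?j1.
Qed.

Lemma measurable_wrt_filt_invariant n (f : T -> R) :
  measurable_wrt (filt e alpha n) f ->
  forall x y, decision_vector n x = decision_vector n y -> f x = f y.
Proof.
move=> mf x y xy.
have fx := mf _ (measurable_set1 (f x)).
by have /(_ x y xy erefl) -> := filt_decision_vector_invariant fx.
Qed.

Lemma nrej_invariant n x y : decision_vector n x = decision_vector n y ->
  nrej n x = nrej n y.
Proof.
by move=> xy; apply: eq_big_nat => j jn; rewrite (decision_vectorP xy) // -ltnS.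
Qed.

Lemma filt_decision_atom n (v : {ffun 'I_n -> bool}) :
  filt e alpha n (decision_atom v).
Proof.
have -> : decision_atom v =
    \big[setI/setT]_(i <- enum 'I_n) [set x | dec i.+1 x = v i].
  rewrite -bigcap_seq; apply/seteqP; split => [x xv i _|x xv] /=.
    by rewrite -xv ffunE.
  by apply/ffunP => i; rewrite ffunE; apply: xv; rewrite /= mem_enum.
rewrite /filt; set G := (X in <<s X >>); pose GT := g_sigma_algebraType G.
suff : @measurable _ GT
    (\big[setI/setT]_(i <- enum 'I_n) [set x | dec i.+1 x = v i]) by [].
apply: bigsetI_measurable => i _.
have GTi : @measurable _ GT [set x | dec i.+1 x].
  by apply: sub_gen_smallest; exists i.+1; split => //; exact: ltn_ord.
case: (v i) => //; rewrite (_ : [set x | _ = false] = ~` [set x | dec i.+1 x]).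
  exact: measurableC.
by apply/seteqP; split => x /=; case: (dec i.+1 x).
Qed.

Hypothesis measurable_e : forall t, measurable_fun setT (e t).
Hypothesis alpha_predictable :
  forall t, (1 <= t)%N -> measurable_wrt (filt e alpha t.-1) (alpha t).
Hypothesis e_ge0 : forall t x, 0 <= e t x.
Hypothesis alpha_ge0 : forall t x, 0 <= alpha t x.

Lemma measurable_decision_set j : measurable_fun setT (alpha j) ->
  measurable [set x | dec j x].
Proof.
move=> ma; have : measurable_fun setT (fun x => dec j x).
  under eq_fun do rewrite decisionE.
  apply: measurable_and; first exact: measurable_fun_ltr.
  by apply: measurable_fun_ler => //; exact: measurable_funM.
by move/(_ measurableT [set true] I); rewrite setTI.
Qed.

Lemma filt_sub_measurable n : filt e alpha n `<=` measurable.
Proof.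
elim: n => [|n IH]; apply: smallest_sub; first exact: sigma_algebra_measurable.
- by move=> A [j [j1 /(leq_trans j1)]].
- exact: sigma_algebra_measurable.
move=> A [j [j1 jn ->]]; case: ltngtP jn => // [jn _|-> _].
  by apply: IH; apply: sub_gen_smallest; exists j.
apply: measurable_decision_set.
exact: measurable_wrt_measurable IH (alpha_predictable (ltn0Sn n)).
Qed.

Lemma measurable_alpha j : (1 <= j)%N -> measurable_fun setT (alpha j).
Proof.
move=> j1; exact: measurable_wrt_measurable (@filt_sub_measurable j.-1)
  (alpha_predictable j1).
Qed.

Lemma measurable_decision j : (1 <= j)%N ->
  measurable_fun setT (fun x => (dec j x)%:R : R).
Proof.
move=> j1; have mnat : measurable_fun setT (fun b : bool => b%:R : R) by [].
apply: measurableT_comp mnat _; apply: (measurable_fun_bool true).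
by rewrite setTI; exact/measurable_decision_set/measurable_alpha.
Qed.

Lemma measurable_nrej n : measurable_fun setT (nrej n).
Proof.
apply: measurable_sum_seq => j /[!mem_index_iota] /andP[j1 _] _.
exact: measurable_decision.
Qed.

Lemma measurable_oracle_term j : (1 <= j)%N -> measurable_fun setT (oracle_term j).
Proof.
move=> j1; apply: measurable_funM; first exact: measurable_alpha.
apply: measurable_funV_ge1; first exact: measurable_funD (measurable_nrej _) _.
by move=> x; rewrite lerDr nrej_ge0.
Qed.

Lemma measurable_FDP theta t : measurable_fun setT (FDP theta e alpha t).
Proof.
apply: measurable_funM.
  apply: measurable_sum_seq => j /[!mem_index_iota] /andP[j1 _] _.
  exact: measurable_decision.
apply: measurable_funV_ge1; first exact: measurable_maxr (measurable_nrej _) _.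
by move=> x; rewrite le_max lexx orbT.
Qed.

Lemma oracle_term_ge0 j x : 0 <= oracle_term j x.
Proof. by rewrite divr_ge0 // addr_ge0 // nrej_ge0. Qed.

(* A rejection at j <= t raises R_t above R_{j-1}, and alpha_j e_j >= 1. *)
Lemma decision_share_le j t x : (1 <= j <= t)%N ->
  (dec j x)%:R / Num.max (nrej t x) 1 <= oracle_term j x * e j x.
Proof.
move=> /andP[j1 jt]; case djx: (dec j x); last first.
  by rewrite mul0r mulr_ge0 ?oracle_term_ge0.
have /andP[_ ae1] : (0 < alpha j x) && (1 <= alpha j x * e j x) by rewrite -decisionE.
have N1_gt0 : 0 < nrej j.-1 x + 1 by rewrite ltr_wpDl // nrej_ge0.
have N1_le : nrej j.-1 x + 1 <= Num.max (nrej t x) 1.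
  have -> : nrej j.-1 x + 1 = nrej j x by rewrite (nrej_pred x j1) djx.
  by rewrite le_max le_nrej.
rewrite mul1r /oracle_term mulrAC; apply: (le_trans (y := (nrej j.-1 x + 1)^-1)).
  by rewrite lef_pV2 ?posrE // (lt_le_trans N1_gt0 N1_le).
by rewrite ler_peMl // ltW // invr_gt0.
Qed.

Lemma FDP_le_oracle_sum theta t x : FDP theta e alpha t x <=
  \sum_(1 <= j < t.+1 | ~~ theta j) oracle_term j x * e j x.
Proof.
rewrite /FDP /nfalse mulr_suml big_nat_cond [leRHS]big_nat_cond.
by apply: ler_sum => j /andP[/andP[j1 jt] _]; apply: decision_share_le; rewrite j1.
Qed.

Variable P : probability T R.

Lemma FDR_le_sum_integral theta t : (FDR P theta e alpha t <=
  \sum_(1 <= j < t.+1 | ~~ theta j) \int[P]_x (oracle_term j x * e j x)%:E)%E.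
Proof.
have m_ot_e j : j \in index_iota 1 t.+1 -> ~~ theta j ->
    measurable_fun setT (fun x => oracle_term j x * e j x).
  move=> /[!mem_index_iota] /andP[j1 _] _.
  exact: measurable_funM (measurable_oracle_term _) _.
rewrite /FDR -ge0_integral_sum_seq //; last first.
  by move=> j x _ _; rewrite mulr_ge0 ?oracle_term_ge0.
apply: ge0_le_integral => //.
- by move=> x _; rewrite lee_fin divr_ge0 ?sumr_ge0 // ?le_max ?ler01 ?orbT.
- exact/measurable_EFinP/measurable_FDP.
- exact/measurable_EFinP/measurable_sum_seq.
- by move=> x _; rewrite lee_fin FDP_le_oracle_sum.
Qed.

Lemma integral_FDPstar_e theta t : (\int[P]_x (FDPstar_e theta e alpha t x)%:E =
  \sum_(1 <= j < t.+1 | ~~ theta j) \int[P]_x (oracle_term j x)%:E)%E.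
Proof.
apply: ge0_integral_sum_seq => [j /[!mem_index_iota] /andP[j1 _] _|j x _ _].
  exact: measurable_oracle_term.
exact: oracle_term_ge0.
Qed.

Lemma integral_oracle_term_e_le j : (1 <= j)%N ->
  condexp_le1 P (filt e alpha j.-1) (e j) ->
  (\int[P]_x (oracle_term j x * e j x)%:E <= \int[P]_x (oracle_term j x)%:E)%E.
Proof.
move=> j1 ce; apply: (condexp_le1_integral_mul (@filt_sub_measurable j.-1)
  (measurable_e j) (e_ge0 j) (oracle_term_ge0 j) ce (@filt_decision_atom j.-1)).
- by move=> v w _ _ [x [/= <- <-]].
- by move=> x; exists (decision_vector j.-1 x).
- move=> v x y /= xv yv; have xy : decision_vector j.-1 x = decision_vector j.-1 y.
    by rewrite xv yv.
  by rewrite /oracle_term (measurable_wrt_filt_invariant (alpha_predictable j1) xy)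
    (nrej_invariant xy).
- exact: measurable_oracle_term.
Qed.

End online_fdr.

Theorem theorem1 (d : measure_display) (T : measurableType d) (R : realType)
  (P : probability T R) (a : R) (theta : nat -> bool)
  (e alpha : nat -> T -> R) :
  0 < a -> a < 1 ->
  (forall t, measurable_fun setT (e t)) ->
  (forall t x, 0 <= e t x) ->
  (forall t x, 0 <= alpha t x) ->
  (forall t, (1 <= t)%N -> measurable_wrt (filt e alpha t.-1) (alpha t)) ->
  (forall t, (1 <= t)%N -> ~~ theta t ->
     condexp_le1 P (filt e alpha t.-1) (e t)) ->
  forall t, (1 <= t)%N ->
    (\int[P]_x (FDPstar_e theta e alpha t x)%:E <= a%:E)%E ->
    (FDR P theta e alpha t <= a%:E)%E.
Proof.
move=> _ _ me e0 a0 aF ce t _; apply: le_trans.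
apply: le_trans (FDR_le_sum_integral me aF e0 a0 P theta t) _.
rewrite integral_FDPstar_e // big_nat_cond [leRHS]big_nat_cond.
apply: lee_sum => j /andP[/andP[j1 _] nj].
exact: integral_oracle_term_e_le (ce j j1 nj).
Qed.
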